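(* For any natural number $n \geq 1$, $\{\omega \cdot 2, \omega^\star \cdot 2\} \leq_c \{\omega^2 \cdot n, (\omega^2)^\star \cdot n\}$.
   Context: Structures have domains contained in $\omega$. For countable structures $\mathcal{A},\mathcal{B}$, the class $\{\mathcal{A},\mathcal{B}\}$ denotes the class of all structures (with domain $\subseteq\omega$) isomorphic to $\mathcal{A}$ or to $\mathcal{B}$. Linear orders are in the language $\{<\}$; $L^\star$ is the reverse of a linear order $L$; $\omega\cdot 2$, $\omega^2\cdot n$ are ordinal order types. An enumeration operator $\Gamma$ is a c.e. set of pairs $(\alpha,\varphi)$ with $\alpha$ a finite set of basic (atomic or negated atomic) sentences of the input language with constants from $\omega$ and $\varphi$ a basic sentence of the output language with constants from $\omega$; $\Gamma(X)=\{\varphi : (\alpha,\varphi)\in\Gamma,\ \alpha\subseteq X\}$. $\Gamma$ is a computable embedding of $\mathcal{K}_0$ into $\mathcal{K}_1$ ($\mathcal{K}_0\leq_c\mathcal{K}_1$) if for every $\mathcal{A}\in\mathcal{K}_0$, $\Gamma$ applied to the atomic diagram of $\mathcal{A}$ is the atomic diagram of a structure $\Gamma(\mathcal{A})\in\mathcal{K}_1$, and for all $\mathcal{A},\mathcal{B}\in\mathcal{K}_0$, $\mathcal{A}\cong\mathcal{B}$ iff $\Gamma(\mathcal{A})\cong\Gamma(\mathcal{B})$. *)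

From Stdlib Require Import Arith List Cantor.
Import ListNotations.

(* Arguments are lists of naturals (missing arguments default to 0).   *)
Inductive prf : Type :=
| PZero : prf
| PSucc : prf
| PProj : nat -> prf
| PComp : prf -> list prf -> prf
| PPrec : prf -> prf -> prf
| PMu   : prf -> prf.

Inductive eval : prf -> list nat -> nat -> Prop :=
| ev_zero : forall args, eval PZero args 0
| ev_succ : forall args, eval PSucc args (S (nth 0 args 0))
| ev_proj : forall i args, eval (PProj i) args (nth i args 0)
| ev_comp : forall f gs args ys y,
    evals gs args ys -> eval f ys y -> eval (PComp f gs) args y
| ev_prec0 : forall f g rest y,
    eval f rest y -> eval (PPrec f g) (0 :: rest) y
| ev_precS : forall f g n rest r y,
    eval (PPrec f g) (n :: rest) r -> eval g (n :: r :: rest) y ->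
    eval (PPrec f g) (S n :: rest) y
| ev_prec_nil : forall f g y,
    eval (PPrec f g) [0] y -> eval (PPrec f g) [] y
| ev_mu : forall f args n,
    eval f (n :: args) 0 ->
    (forall m, m < n -> exists k, eval f (m :: args) (S k)) ->
    eval (PMu f) args n
with evals : list prf -> list nat -> list nat -> Prop :=
| evs_nil : forall args, evals [] args []
| evs_cons : forall g gs args y ys,
    eval g args y -> evals gs args ys -> evals (g :: gs) args (y :: ys).

Definition ce (S : nat -> Prop) : Prop :=
  exists e : prf, forall x, S x <-> exists y, eval e [x] y.

Record structure : Type := Struct {
  sdom : nat -> Prop;
  srel : nat -> nat -> Prop }.

(* atomic sentences with constants from omega, and basic sentences
   (true = the atom itself, false = its negation) *)
Inductive atom : Type := AEq (x y : nat) | ALt (x y : nat).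
Definition basic : Type := (bool * atom)%type.

Definition atom_holds (A : structure) (a : atom) : Prop :=
  match a with
  | AEq x y => x = y
  | ALt x y => srel A x y
  end.

Definition atom_consts_in (A : structure) (a : atom) : Prop :=
  match a with
  | AEq x y | ALt x y => sdom A x /\ sdom A y
  end.

Definition diag (A : structure) (phi : basic) : Prop :=
  atom_consts_in A (snd phi) /\
  (if fst phi then atom_holds A (snd phi) else ~ atom_holds A (snd phi)).

Definition iso (A B : structure) : Prop :=
  exists f g : nat -> nat,
    (forall x, sdom A x -> sdom B (f x) /\ g (f x) = x) /\
    (forall y, sdom B y -> sdom A (g y) /\ f (g y) = y) /\
    (forall x y, sdom A x -> sdom A y -> (srel A x y <-> srel B (f x) (f y))).

Definition class2 (A B : structure) (C : structure) : Prop := iso C A \/ iso C B.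

Definition code_atom (a : atom) : nat :=
  match a with
  | AEq x y => to_nat (0, to_nat (x, y))
  | ALt x y => to_nat (1, to_nat (x, y))
  end.
Definition code_basic (phi : basic) : nat :=
  to_nat ((if fst phi then 1 else 0), code_atom (snd phi)).
Fixpoint code_list (l : list basic) : nat :=
  match l with
  | [] => 0
  | phi :: l' => S (to_nat (code_basic phi, code_list l'))
  end.

(* An enumeration operator: a set Gamma of pairs (alpha, phi), alpha a
   finite set (given as a list) of basic sentences and phi a basic
   sentence, whose set of codes is c.e. *)
Definition enum_operator (Gamma : list basic -> basic -> Prop) : Prop :=
  ce (fun c => exists alpha phi,
         c = to_nat (code_list alpha, code_basic phi) /\ Gamma alpha phi).

Definition apply_op (Gamma : list basic -> basic -> Prop) (X : basic -> Prop)
  (phi : basic) : Prop :=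
  exists alpha, Gamma alpha phi /\ (forall psi, In psi alpha -> X psi).

Definition comp_embeddable (K0 K1 : structure -> Prop) : Prop :=
  exists Gamma,
    enum_operator Gamma /\
    (forall A, K0 A ->
       exists B, K1 B /\ forall phi, diag B phi <-> apply_op Gamma (diag A) phi) /\
    (forall A A' B B', K0 A -> K0 A' ->
       (forall phi, diag B phi <-> apply_op Gamma (diag A) phi) ->
       (forall phi, diag B' phi <-> apply_op Gamma (diag A') phi) ->
       (iso A A' <-> iso B B')).

Definition full_dom : nat -> Prop := fun _ => True.

Definition ord_omega : nat -> nat -> Prop := lt.
(* omega^2: pairs (a, b) (via Cantor decoding), lexicographic *)
Definition ord_omega2 (x y : nat) : Prop :=
  fst (of_nat x) < fst (of_nat y) \/
  (fst (of_nat x) = fst (of_nat y) /\ snd (of_nat x) < snd (of_nat y)).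
Definition ord_rev (L : nat -> nat -> Prop) (x y : nat) : Prop := L y x.
(* L . k : k copies of L in order; x lies in copy (x mod k) at place x / k *)
Definition ord_times (L : nat -> nat -> Prop) (k : nat) (x y : nat) : Prop :=
  x mod k < y mod k \/ (x mod k = y mod k /\ L (x / k) (y / k)).

Definition omega_times_2 : structure := Struct full_dom (ord_times ord_omega 2).
Definition omega_star_times_2 : structure :=
  Struct full_dom (ord_times (ord_rev ord_omega) 2).
Definition omega2_times (n : nat) : structure :=
  Struct full_dom (ord_times ord_omega2 n).
Definition omega2_star_times (n : nat) : structure :=
  Struct full_dom (ord_times (ord_rev ord_omega2) n).

From Stdlib Require Import Arith List Cantor Lia Bool.
From Stdlib Require Import Classical ClassicalEpsilon FinFun.
Import ListNotations.

(* The operator sends a linear order A to its expansion: the triples (i, a, x)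
   with i < n, where a is not an endpoint of A, as witnessed by p < a < q, and
   x = min(p, q) as natural numbers; the triples are ordered lexicographically
   by i, then by a and x in A.  Every fact of the atomic diagram of the
   expansion follows from the five facts p1 < a1 < q1, p2 < a2 < q2 (the two
   triples exist) and one fact u < v of A (the reason for their order), which
   makes the operator a decidable, hence c.e., set of rules.

   If A is omega.2, a pivot a in the first omega has only finitely many points
   x (all below some witness p < a of the first omega), while for a pivot in
   the second omega every x <> a is a point.  Splitting the expansion into rows
   of type omega (row 0 for the first omega, two rows per pivot of the second)
   shows it is omega^2.n.  Reversing A reverses the expansion, so omega*.2 goes
   to (omega^2)*.n.  In both classes the two order types are told apart by the
   existence of a least element, so the operator preserves and reflects
   isomorphism. *)

(** * Partial recursive functions *)

Definition computes (p : prf) (F : list nat -> nat) : Prop :=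
  forall args y, eval p args y <-> y = F args.

Lemma computes_zero : computes PZero (fun _ => 0).
Proof. split; [inversion 1; auto | intros ->; constructor]. Qed.

Lemma computes_succ : computes PSucc (fun args => S (nth 0 args 0)).
Proof. split; [inversion 1; auto | intros ->; constructor]. Qed.

Lemma computes_proj i : computes (PProj i) (fun args => nth i args 0).
Proof. split; [inversion 1; auto | intros ->; constructor]. Qed.

Lemma evals_computes gs Gs : Forall2 computes gs Gs ->
  forall args ys, evals gs args ys <-> ys = map (fun G => G args) Gs.
Proof.
  induction 1 as [|g G gs Gs Hg _ IH]; intros args ys; split.
  - now inversion 1.
  - intros ->; constructor.
  - inversion 1; subst. cbn. f_equal; [now apply Hg | now apply IH].
  - intros ->. constructor; [now apply Hg | now apply IH].
Qed.

Lemma computes_comp f F gs Gs : computes f F -> Forall2 computes gs Gs ->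
  computes (PComp f gs) (fun args => F (map (fun G => G args) Gs)).
Proof.
  intros Hf Hgs args y. split.
  - inversion 1 as [| | |? ? ? ys ? Hys Hy| | | |]; subst.
    apply (evals_computes _ _ Hgs) in Hys as ->. now apply Hf.
  - intros ->. econstructor; [now apply (evals_computes _ _ Hgs) | now apply Hf].
Qed.

Fixpoint prim_rec (F G : list nat -> nat) (n : nat) (rest : list nat) : nat :=
  match n with
  | 0 => F rest
  | S m => G (m :: prim_rec F G m rest :: rest)
  end.

Lemma computes_prec f F g G : computes f F -> computes g G ->
  computes (PPrec f g) (fun args => prim_rec F G (hd 0 args) (tl args)).
Proof.
  intros Hf Hg.
  assert (Hcons : forall m rest y, eval (PPrec f g) (m :: rest) y <-> y = prim_rec F G m rest).
  { induction m as [|m IH]; intros rest y; split.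
    - inversion 1; subst. now apply Hf.
    - intros ->. constructor. now apply Hf.
    - inversion 1 as [| | | | |? ? ? ? r ? Hr Hy| |]; subst.
      apply IH in Hr as ->. now apply Hg.
    - intros ->. econstructor; [now apply IH | now apply Hg]. }
  intros [|m rest] y; [|apply Hcons].
  split; [inversion 1; subst; now apply Hcons | intros ->; constructor; now apply Hcons].
Qed.

Lemma computes_ext p F G : computes p F -> (forall args, F args = G args) -> computes p G.
Proof. intros Hp HFG args y. rewrite (Hp args y), HFG. reflexivity. Qed.

Ltac computes_args :=
  repeat apply Forall2_cons; try apply Forall2_nil; try apply computes_proj; try eassumption.

Definition padd : prf := PPrec (PProj 0) (PComp PSucc [PProj 1]).

Lemma computes_add : computes padd (fun args => nth 0 args 0 + nth 1 args 0).
Proof.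
  eapply computes_ext.
  { apply computes_prec; [apply computes_proj|].
    apply computes_comp; [apply computes_succ | computes_args]. }
  intros [|m rest]; [reflexivity|]. cbn.
  induction m as [|m IH]; cbn; congruence.
Qed.

Definition psub : prf :=
  PComp (PPrec (PProj 0) (PComp (PPrec PZero (PProj 0)) [PProj 1])) [PProj 1; PProj 0].

Lemma computes_sub : computes psub (fun args => nth 0 args 0 - nth 1 args 0).
Proof.
  assert (Hpred : computes (PPrec PZero (PProj 0)) (fun args => pred (nth 0 args 0))).
  { eapply computes_ext; [apply computes_prec; [apply computes_zero | apply computes_proj]|].
    intros [|[] ?]; reflexivity. }
  eapply computes_ext.
  { apply computes_comp; [|computes_args].
    apply computes_prec; [apply computes_proj|].
    apply computes_comp; [apply Hpred | computes_args]. }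
  intros args. cbn. induction (nth 1 args 0); cbn; lia.
Qed.

Definition pconst (k : nat) : prf := Nat.iter k (fun p => PComp PSucc [p]) PZero.

Lemma computes_const k : computes (pconst k) (fun _ => k).
Proof.
  induction k as [|k IH]; [apply computes_zero|].
  eapply computes_ext; [apply computes_comp; [apply computes_succ | computes_args]|].
  reflexivity.
Qed.

(** * Arithmetic expressions and c.e. sets *)

(* The step [s] of [EIter s a] sees only the counter and the previous value, so
   that it compiles to [PPrec] whatever the number of outer variables. *)
Inductive expr : Type :=
| EVar (k : nat)
| ECst (k : nat)
| EAdd (a b : expr)
| ESub (a b : expr)
| EIter (s a : expr).

Fixpoint denote (e : expr) (env : list nat) : nat :=
  match e with
  | EVar k => nth k env 0
  | ECst k => k
  | EAdd a b => denote a env + denote b env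
  | ESub a b => denote a env - denote b env
  | EIter s a => nat_rec (fun _ => nat) 0 (fun m r => denote s [m; r]) (denote a env)
  end.

Fixpoint compile (e : expr) : prf :=
  match e with
  | EVar k => PProj k
  | ECst k => pconst k
  | EAdd a b => PComp padd [compile a; compile b]
  | ESub a b => PComp psub [compile a; compile b]
  | EIter s a => PComp (PPrec PZero (compile s)) [compile a]
  end.

Lemma computes_compile e : computes (compile e) (denote e).
Proof.
  induction e as [k|k|a IHa b IHb|a IHa b IHb|s IHs a IHa]; cbn.
  - apply computes_proj.
  - apply computes_const.
  - eapply computes_ext; [apply computes_comp; [apply computes_add | computes_args]|].
    reflexivity.
  - eapply computes_ext; [apply computes_comp; [apply computes_sub | computes_args]|].
    reflexivity.
  - eapply computes_ext.
    { apply computes_comp; [apply computes_prec; [apply computes_zero | apply IHs]|].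
      computes_args. }
    intros args. cbn. induction (denote a args); cbn; congruence.
Qed.

Fixpoint esubst (s : list expr) (e : expr) : expr :=
  match e with
  | EVar k => nth k s (ECst 0)
  | ECst k => ECst k
  | EAdd a b => EAdd (esubst s a) (esubst s b)
  | ESub a b => ESub (esubst s a) (esubst s b)
  | EIter st a => EIter st (esubst s a)
  end.

Lemma denote_esubst s e env :
  denote (esubst s e) env = denote e (map (fun d => denote d env) s).
Proof.
  induction e as [k| | | |]; cbn; try congruence.
  rewrite <- (map_nth (fun d => denote d env) s (ECst 0) k). reflexivity.
Qed.

Inductive bexpr : Type :=
| BEq (a b : expr)
| BLe (a b : expr)
| BLt (a b : expr)
| BAnd (p q : bexpr)
| BOr (p q : bexpr)
| BNot (p : bexpr).

Fixpoint bdenote (p : bexpr) (env : list nat) : bool :=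
  match p with
  | BEq a b => denote a env =? denote b env
  | BLe a b => denote a env <=? denote b env
  | BLt a b => denote a env <? denote b env
  | BAnd p q => bdenote p env && bdenote q env
  | BOr p q => bdenote p env || bdenote q env
  | BNot p => negb (bdenote p env)
  end.

Fixpoint bholds (p : bexpr) (env : list nat) : Prop :=
  match p with
  | BEq a b => denote a env = denote b env
  | BLe a b => denote a env <= denote b env
  | BLt a b => denote a env < denote b env
  | BAnd p q => bholds p env /\ bholds q env
  | BOr p q => bholds p env \/ bholds q env
  | BNot p => ~ bholds p env
  end.

Lemma bdenote_true_iff p env : bdenote p env = true <-> bholds p env.
Proof.
  induction p as [a b|a b|a b|p IHp q IHq|p IHp q IHq|p IHp]; cbn [bdenote bholds].
  - apply Nat.eqb_eq.
  - apply Nat.leb_le.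
  - apply Nat.ltb_lt.
  - now rewrite andb_true_iff, IHp, IHq.
  - now rewrite orb_true_iff, IHp, IHq.
  - rewrite negb_true_iff, <- IHp. destruct (bdenote p env); intuition discriminate.
Qed.

Fixpoint indicator (p : bexpr) : expr :=
  match p with
  | BEq a b => ESub (ECst 1) (EAdd (ESub a b) (ESub b a))
  | BLe a b => ESub (ECst 1) (ESub a b)
  | BLt a b => ESub (ECst 1) (ESub (EAdd (ECst 1) a) b)
  | BAnd p q => ESub (ECst 1) (EAdd (ESub (ECst 1) (indicator p)) (ESub (ECst 1) (indicator q)))
  | BOr p q => ESub (ECst 1) (ESub (ECst 1) (EAdd (indicator p) (indicator q)))
  | BNot p => ESub (ECst 1) (indicator p)
  end.

Lemma denote_indicator p env : denote (indicator p) env = Nat.b2n (bdenote p env).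
Proof.
  induction p as [a b|a b|a b|p IHp q IHq|p IHp q IHq|p IHp]; cbn [indicator bdenote denote].
  - destruct (Nat.eqb_spec (denote a env) (denote b env)); cbn [Nat.b2n]; lia.
  - destruct (Nat.leb_spec (denote a env) (denote b env)); cbn [Nat.b2n]; lia.
  - destruct (Nat.ltb_spec (denote a env) (denote b env)); cbn [Nat.b2n]; lia.
  - rewrite IHp, IHq. now destruct (bdenote p env), (bdenote q env).
  - rewrite IHp, IHq. now destruct (bdenote p env), (bdenote q env).
  - rewrite IHp. now destruct (bdenote p env).
Qed.

Fixpoint bsubst (s : list expr) (p : bexpr) : bexpr :=
  match p with
  | BEq a b => BEq (esubst s a) (esubst s b)
  | BLe a b => BLe (esubst s a) (esubst s b)
  | BLt a b => BLt (esubst s a) (esubst s b)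
  | BAnd p q => BAnd (bsubst s p) (bsubst s q)
  | BOr p q => BOr (bsubst s p) (bsubst s q)
  | BNot p => BNot (bsubst s p)
  end.

Lemma bdenote_bsubst s p env :
  bdenote (bsubst s p) env = bdenote p (map (fun d => denote d env) s).
Proof. induction p; cbn; rewrite ?denote_esubst; congruence. Qed.

(* The search [PMu] stops at once on an input satisfying [p] and runs forever
   on any other input. *)
Lemma ce_bexpr (p : bexpr) : ce (fun c => bdenote p [c] = true).
Proof.
  set (test := esubst [EVar 1] (indicator (BNot p))).
  assert (Htest : forall m c y, eval (compile test) [m; c] y <-> y = Nat.b2n (negb (bdenote p [c]))).
  { intros m c y. rewrite (computes_compile test [m; c] y). unfold test.
    rewrite denote_esubst, denote_indicator. reflexivity. }
  exists (PMu (compile test)). intros c. split.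
  - intros Hp. exists 0. constructor; [|intros; lia].
    apply Htest. now rewrite Hp.
  - intros [y Hy]. inversion Hy as [| | | | | | |? ? ? Hy0 _]; subst.
    apply Htest in Hy0. now destruct (bdenote p [c]).
Qed.

Lemma ce_decodable (k : nat) (cond : bexpr) (code : expr) (dec : list expr) :
  length dec = k ->
  (forall env, length env = k -> map (fun d => denote d [denote code env]) dec = env) ->
  ce (fun c => exists env, length env = k /\ bdenote cond env = true /\ c = denote code env).
Proof.
  intros Hlen Hdec.
  destruct (ce_bexpr (BAnd (BEq (EVar 0) (esubst dec code)) (bsubst dec cond))) as [e He].
  exists e. intros c. rewrite <- He. cbn [bdenote]. rewrite denote_esubst, bdenote_bsubst.
  cbn [denote nth]. rewrite andb_true_iff, Nat.eqb_eq. split.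
  - intros (env & Henv & Hcond & ->). now rewrite Hdec.
  - intros [Hc Hcond]. eexists. split; [|split; [exact Hcond | exact Hc]].
    now rewrite length_map.
Qed.

Lemma ce_ext (S S' : nat -> Prop) : (forall c, S c <-> S' c) -> ce S -> ce S'.
Proof. intros H [e He]. exists e. intros c. now rewrite <- H. Qed.

(** * Cantor unpairing by primitive recursion *)

(* The [nat_rec] of [Cantor.to_nat], so that [to_nat (x, y)] unfolds to
   [y + tri (y + x)]. *)
Definition tri (n : nat) : nat := nat_rec (fun _ => nat) 0 (fun i t => S i + t) n.

Fixpoint tri_root (c : nat) : nat :=
  match c with
  | 0 => 0
  | S c' => tri_root c' + (1 - (tri (S (tri_root c')) - c))
  end.

Lemma tri_S n : tri (S n) = S n + tri n.
Proof. reflexivity. Qed.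

Lemma tri_root_spec c : tri (tri_root c) <= c < tri (S (tri_root c)).
Proof.
  induction c as [|c IH]; cbn [tri_root]; [cbn; lia|].
  set (w := tri_root c) in *. rewrite tri_S in *.
  destruct (Nat.le_gt_cases (S w + tri w) (S c)).
  - replace (w + (1 - (S w + tri w - S c))) with (S w) by lia. rewrite !tri_S. lia.
  - replace (w + (1 - (S w + tri w - S c))) with w by lia. rewrite tri_S. lia.
Qed.

Lemma of_nat_tri_root c :
  of_nat c = (tri_root c - (c - tri (tri_root c)), c - tri (tri_root c)).
Proof.
  pose proof (tri_root_spec c) as [Hlo Hhi]. rewrite tri_S in Hhi.
  rewrite <- (cancel_of_to (tri_root c - (c - tri (tri_root c)), c - tri (tri_root c))).
  f_equal. change (to_nat (?x, ?y)) with (y + tri (y + x)).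
  replace (c - tri (tri_root c) + (tri_root c - (c - tri (tri_root c)))) with (tri_root c) by lia.
  lia.
Qed.

Definition triE (a : expr) : expr := EIter (EAdd (EAdd (ECst 1) (EVar 0)) (EVar 1)) a.
Definition pairE (a b : expr) : expr := EAdd b (triE (EAdd b a)).
Definition rootE (a : expr) : expr :=
  EIter (EAdd (EVar 1)
    (ESub (ECst 1) (ESub (triE (EAdd (ECst 1) (EVar 1))) (EAdd (ECst 1) (EVar 0))))) a.
Definition sndE (a : expr) : expr := ESub a (triE (rootE a)).
Definition fstE (a : expr) : expr := ESub (rootE a) (sndE a).

Definition minE (a b : expr) : expr := ESub a (ESub a b).

Lemma denote_minE a b env : denote (minE a b) env = Nat.min (denote a env) (denote b env).
Proof. cbn. lia. Qed.

Lemma denote_triE a env : denote (triE a) env = tri (denote a env).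
Proof. reflexivity. Qed.

Lemma denote_pairE a b env : denote (pairE a b) env = to_nat (denote a env, denote b env).
Proof. reflexivity. Qed.

Lemma denote_rootE a env : denote (rootE a) env = tri_root (denote a env).
Proof. cbn. induction (denote a env) as [|c IH]; cbn; [reflexivity|]. now rewrite IH. Qed.

Lemma denote_sndE a env : denote (sndE a) env = snd (of_nat (denote a env)).
Proof. rewrite of_nat_tri_root. unfold sndE. cbn [denote]. now rewrite denote_triE, denote_rootE. Qed.

Lemma denote_fstE a env : denote (fstE a) env = fst (of_nat (denote a env)).
Proof.
  rewrite of_nat_tri_root. unfold fstE. cbn [denote].
  now rewrite denote_rootE, denote_sndE, of_nat_tri_root.
Qed.

(** * Linear orders *)

Record linear_order (A : structure) : Prop := {
  lo_irrefl : forall x, sdom A x -> ~ srel A x x;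
  lo_trans : forall x y z, sdom A x -> sdom A y -> sdom A z ->
    srel A x y -> srel A y z -> srel A x z;
  lo_total : forall x y, sdom A x -> sdom A y -> x = y \/ srel A x y \/ srel A y x }.

Definition struct_rev (A : structure) : structure := Struct (sdom A) (fun x y => srel A y x).

Lemma iso_refl A : iso A A.
Proof. exists (fun x => x), (fun x => x). repeat split; tauto. Qed.

Lemma iso_sym A B : iso A B -> iso B A.
Proof.
  intros (f & g & Hf & Hg & Hrel). exists g, f. split; [|split]; [exact Hg | exact Hf|].
  intros x y Hx Hy. destruct (Hg x Hx) as [Hgx Ex], (Hg y Hy) as [Hgy Ey].
  rewrite (Hrel _ _ Hgx Hgy), Ex, Ey. reflexivity.
Qed.

Lemma iso_trans A B C : iso A B -> iso B C -> iso A C.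
Proof.
  intros (f & g & Hf & Hg & Hrel) (f' & g' & Hf' & Hg' & Hrel').
  exists (fun x => f' (f x)), (fun z => g (g' z)). split; [|split].
  - intros x Hx. destruct (Hf x Hx) as [Hfx Ex], (Hf' _ Hfx) as [Hf'x Ex']. now rewrite Ex'.
  - intros z Hz. destruct (Hg' z Hz) as [Hg'z Ez], (Hg _ Hg'z) as [Hgz Ez']. now rewrite Ez'.
  - intros x y Hx Hy. rewrite (Hrel _ _ Hx Hy). apply Hrel'; [apply Hf | apply Hf]; assumption.
Qed.

Add Relation structure iso
  reflexivity proved by iso_refl symmetry proved by iso_sym transitivity proved by iso_trans
  as iso_setoid.

Lemma iso_rev A B : iso A B -> iso (struct_rev A) (struct_rev B).
Proof.
  intros (f & g & Hf & Hg & Hrel). exists f, g. split; [|split]; auto.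
  intros x y Hx Hy. now apply Hrel.
Qed.

Lemma linear_order_iso A B : iso A B -> linear_order B -> linear_order A.
Proof.
  intros (f & g & Hf & _ & Hrel) [Hirr Htr Htot]. split.
  - intros x Hx. rewrite (Hrel x x Hx Hx). apply Hirr, Hf, Hx.
  - intros x y z Hx Hy Hz. rewrite (Hrel x y), (Hrel y z), (Hrel x z) by assumption.
    apply Htr; apply Hf; assumption.
  - intros x y Hx Hy. rewrite (Hrel x y), (Hrel y x) by assumption.
    destruct (Hf x Hx) as [Hfx Ex], (Hf y Hy) as [Hfy Ey].
    destruct (Htot _ _ Hfx Hfy) as [E|H]; [left; congruence | now right].
Qed.

Lemma linear_order_times (L : nat -> nat -> Prop) k :
  (forall x, ~ L x x) -> (forall x y z, L x y -> L y z -> L x z) ->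
  (forall x y, x = y \/ L x y \/ L y x) ->
  linear_order (Struct full_dom (ord_times L k)).
Proof.
  intros Hirr Htr Htot. unfold ord_times. split; cbn.
  - intros x _ [H|[_ H]]; [lia | exact (Hirr _ H)].
  - intros x y z _ _ _ [H1|[E1 H1]] [H2|[E2 H2]]; try lia. right. split; [lia | eauto].
  - intros x y _ _.
    destruct (Nat.lt_trichotomy (x mod k) (y mod k)) as [H|[E|H]]; auto.
    destruct (Htot (x / k) (y / k)) as [E'|[H|H]]; auto.
    left. rewrite (Nat.div_mod_eq x k), (Nat.div_mod_eq y k), E, E'. reflexivity.
Qed.

Lemma iso_of_same_diag B C : (forall phi, diag B phi <-> diag C phi) -> iso B C.
Proof.
  intros H. assert (Hdom : forall x, sdom B x <-> sdom C x).
  { intros x. specialize (H (true, AEq x x)). unfold diag in H; cbn in H. tauto. }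
  exists (fun x => x), (fun x => x). split; [|split].
  - intros x Hx. split; [apply Hdom|]; auto.
  - intros x Hx. split; [apply Hdom|]; auto.
  - intros x y Hx Hy. specialize (H (true, ALt x y)). unfold diag in H; cbn in H.
    pose proof (proj1 (Hdom x) Hx). pose proof (proj1 (Hdom y) Hy). tauto.
Qed.

Lemma iso_of_order_bijection (A : structure) (L : nat -> nat -> Prop) (f : nat -> nat) :
  linear_order A -> (forall z, ~ L z z) ->
  (forall z, exists x, sdom A x /\ f x = z) ->
  (forall x y, sdom A x -> sdom A y -> (srel A x y <-> L (f x) (f y))) ->
  iso A (Struct full_dom L).
Proof.
  intros [_ _ Htot] HL Hsurj Hrel.
  assert (Hinj : forall x y, sdom A x -> sdom A y -> f x = f y -> x = y).
  { intros x y Hx Hy E. destruct (Htot x y Hx Hy) as [|[H|H]]; auto;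
      apply Hrel in H; auto; rewrite E in H; now apply HL in H. }
  set (g z := proj1_sig (constructive_indefinite_description _ (Hsurj z))).
  assert (Hg : forall z, sdom A (g z) /\ f (g z) = z)
    by (intros z; exact (proj2_sig (constructive_indefinite_description _ (Hsurj z)))).
  exists f, g. split; [|split].
  - intros x Hx. split; [exact I|]. apply Hinj; apply Hg || assumption.
  - intros z _. apply Hg.
  - exact Hrel.
Qed.

(** * Recognising omega and omega^2.n *)

Definition card_is (P : nat -> Prop) (k : nat) : Prop :=
  exists l, NoDup l /\ length l = k /\ forall y, In y l <-> P y.

Lemma card_is_bounded (P : nat -> Prop) N : (forall y, P y -> y < N) -> exists k, card_is P k.
Proof.
  intros HN.
  set (l := filter (fun y => if excluded_middle_informative (P y) then true else false) (seq 0 N)).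
  exists (length l), l. split; [apply NoDup_filter, seq_NoDup|]. split; [reflexivity|].
  intros y. unfold l. rewrite filter_In, in_seq.
  destruct (excluded_middle_informative (P y)) as [Hy|Hy].
  - specialize (HN y Hy). split; [intros _; exact Hy | intros _; split; [lia | reflexivity]].
  - split; [intros [_ E]; discriminate | contradiction].
Qed.

Lemma card_is_le P Q k k' : (forall y, P y -> Q y) -> card_is P k -> card_is Q k' -> k <= k'.
Proof.
  intros HPQ (l & Hl & <- & HlP) (l' & _ & <- & Hl'Q).
  apply NoDup_incl_length; [exact Hl|]. intros y Hy. apply Hl'Q, HPQ, HlP, Hy.
Qed.

Lemma card_is_unique P k k' : card_is P k -> card_is P k' -> k = k'.
Proof. intros H H'. apply Nat.le_antisymm; eapply card_is_le; eauto. Qed.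

Lemma card_is_add P z k : ~ P z -> card_is P k -> card_is (fun y => y = z \/ P y) (S k).
Proof.
  intros Hz (l & Hl & <- & HlP). exists (z :: l). split; [|split; [reflexivity|]].
  - constructor; [rewrite HlP|]; assumption.
  - intros y. cbn. rewrite HlP. intuition.
Qed.

Lemma card_is_nonempty P k : card_is P (S k) -> exists y, P y.
Proof. intros ([|y l] & _ & Hlen & HlP); [discriminate|]. exists y. apply HlP. now left. Qed.

Lemma ex_least_nat (P : nat -> Prop) : (exists k, P k) -> exists k, P k /\ forall j, P j -> k <= j.
Proof.
  intros HP. destruct (dec_inh_nat_subset_has_unique_least_element P) as (k & [Hk Hmin] & _);
    [intros j; apply classic | exact HP |].
  exists k. split; assumption.
Qed.

(* A junk value when [x] has infinitely many predecessors. *)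
Definition rank (A : structure) (x : nat) : nat :=
  epsilon (inhabits 0) (card_is (fun y => sdom A y /\ srel A y x)).

Section OmegaRank.
Variable A : structure.
Hypothesis lin : linear_order A.
Hypothesis pred_finite : forall x, sdom A x -> exists N, forall y, sdom A y -> srel A y x -> y < N.
Hypothesis unbounded : forall N, exists x, sdom A x /\ N <= x.

Lemma rank_spec x : sdom A x -> card_is (fun y => sdom A y /\ srel A y x) (rank A x).
Proof.
  intros Hx. unfold rank. apply epsilon_spec. destruct (pred_finite x Hx) as [N HN].
  apply (card_is_bounded _ N). intros y [Hy Hyx]. auto.
Qed.

Lemma rank_lt x y : sdom A x -> sdom A y -> srel A x y -> rank A x < rank A y.
Proof.
  intros Hx Hy Hxy. apply (card_is_le (fun z => z = x \/ (sdom A z /\ srel A z x))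
    (fun z => sdom A z /\ srel A z y)).
  - intros z [->|[Hz Hzx]]; split; eauto using lo_trans.
  - apply card_is_add; [intros [_ H]; exact (lo_irrefl _ lin x Hx H) | now apply rank_spec].
  - now apply rank_spec.
Qed.

Lemma rank_lt_iff x y : sdom A x -> sdom A y -> (srel A x y <-> rank A x < rank A y).
Proof.
  intros Hx Hy. split; [now apply rank_lt|]. intros Hlt.
  destruct (lo_total _ lin x y Hx Hy) as [->|[H|H]]; [lia | exact H|].
  apply rank_lt in H; auto. lia.
Qed.

Lemma rank_next x m : sdom A x -> sdom A m -> srel A x m ->
  (forall y, sdom A y -> srel A x y -> srel A y m -> False) -> rank A m = S (rank A x).
Proof.
  intros Hx Hm Hxm Hgap. apply (card_is_unique (fun y => sdom A y /\ srel A y m)); [now apply rank_spec|].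
  destruct (card_is_add _ x _ (fun H => lo_irrefl _ lin x Hx (proj2 H)) (rank_spec x Hx))
    as (l & Hl & Hlen & HlP).
  exists l. split; [exact Hl|]. split; [exact Hlen|]. intros y. rewrite HlP. split.
  - intros [->|[Hy Hyx]]; split; eauto using lo_trans.
  - intros [Hy Hym]. destruct (lo_total _ lin x y Hx Hy) as [->|[Hxy|Hyx]]; auto.
    exfalso. eauto.
Qed.

Lemma rank_surjective k : exists x, sdom A x /\ rank A x = k.
Proof.
  induction k as [|k [x [Hx Hk]]].
  - destruct (unbounded 0) as (x0 & Hx0 & _).
    destruct (ex_least_nat (fun j => exists x, sdom A x /\ rank A x = j)) as (j & (x & Hx & <-) & Hmin);
      [eauto|].
    exists x. split; [exact Hx|]. destruct (rank A x) as [|r] eqn:Er; [reflexivity|].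
    pose proof (rank_spec x Hx) as Hc. rewrite Er in Hc.
    destruct (card_is_nonempty _ _ Hc) as (y & Hy & Hyx).
    apply rank_lt in Hyx; auto. specialize (Hmin _ (ex_intro _ y (conj Hy eq_refl))). lia.
  - destruct (pred_finite x Hx) as [N HN]. destruct (unbounded (N + x + 1)) as (z & Hz & HNz).
    assert (Hxz : srel A x z).
    { destruct (lo_total _ lin x z Hx Hz) as [->|[H|H]]; [lia | exact H |].
      specialize (HN z Hz H). lia. }
    destruct (ex_least_nat (fun j => exists m, sdom A m /\ srel A x m /\ rank A m = j))
      as (j & (m & Hm & Hxm & <-) & Hmin); [eauto|].
    exists m. split; [exact Hm|]. rewrite <- Hk. apply rank_next; auto.
    intros y Hy Hxy Hym. apply rank_lt in Hym; auto.
    specialize (Hmin _ (ex_intro _ y (conj Hy (conj Hxy eq_refl)))). lia.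
Qed.

End OmegaRank.

Lemma mod_copy n c q : c < n -> (c + q * n) mod n = c.
Proof. intros H. rewrite Nat.Div0.mod_add. now apply Nat.mod_small. Qed.

Lemma div_copy n c q : c < n -> (c + q * n) / n = q.
Proof. intros H. rewrite Nat.div_add by lia. now rewrite Nat.div_small. Qed.

Lemma ord_omega2_to_nat r k r' k' :
  ord_omega2 (to_nat (r, k)) (to_nat (r', k')) <-> r < r' \/ (r = r' /\ k < k').
Proof. unfold ord_omega2. rewrite !cancel_of_to. reflexivity. Qed.

Section OmegaSquaredTimes.
Variables (n : nat) (A : structure) (col row : nat -> nat).
Hypothesis n_pos : 1 <= n.
Hypothesis lin : linear_order A.
Hypothesis col_bound : forall x, sdom A x -> col x < n.
Hypothesis lex_mono : forall x y, sdom A x -> sdom A y -> srel A x y ->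
  col x < col y \/ (col x = col y /\ row x <= row y).

Definition fiber (c r : nat) : structure :=
  Struct (fun x => sdom A x /\ col x = c /\ row x = r) (srel A).

Hypothesis fiber_unbounded : forall c r N, c < n -> exists x, sdom (fiber c r) x /\ N <= x.
Hypothesis fiber_pred_finite : forall x, sdom A x ->
  exists N, forall y, sdom (fiber (col x) (row x)) y -> srel A y x -> y < N.

Let pos (x : nat) : nat := rank (fiber (col x) (row x)) x.

Lemma linear_order_fiber c r : linear_order (fiber c r).
Proof.
  destruct lin as [Hirr Htr Htot]. split; cbn.
  - intros x [Hx _]. auto.
  - intros x y z [Hx _] [Hy _] [Hz _]. eauto.
  - intros x y [Hx _] [Hy _]. auto.
Qed.

Lemma fiber_pred_finite_in c r x : sdom (fiber c r) x ->
  exists N, forall y, sdom (fiber c r) y -> srel A y x -> y < N.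
Proof. intros (Hx & <- & <-). now apply fiber_pred_finite. Qed.

Lemma lex_iff x y : sdom A x -> sdom A y -> (srel A x y <->
  col x < col y \/ (col x = col y /\ (row x < row y \/ (row x = row y /\ pos x < pos y)))).
Proof.
  intros Hx Hy.
  assert (Hfwd : forall x y, sdom A x -> sdom A y -> srel A x y ->
    col x < col y \/ (col x = col y /\ (row x < row y \/ (row x = row y /\ pos x < pos y)))).
  { clear x y Hx Hy. intros x y Hx Hy Hxy.
    destruct (lex_mono x y Hx Hy Hxy) as [Hc|[Hc Hr]]; [now left | right; split; [exact Hc|]].
    destruct (Nat.eq_dec (row x) (row y)) as [Er|Er]; [right; split; [exact Er|] | left; lia].
    unfold pos. rewrite <- Hc, <- Er.
    apply (rank_lt_iff _ (linear_order_fiber _ _) (fiber_pred_finite_in _ _)); easy. }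
  split; [now apply Hfwd|]. intros H.
  destruct (lo_total _ lin x y Hx Hy) as [->|[Hxy|Hyx]]; [lia | exact Hxy |].
  apply Hfwd in Hyx; auto. lia.
Qed.

(* Each fiber is a copy of omega, ranked by [pos]; [x] goes to the place
   [(row x, pos x)] of the [col x]-th copy of omega^2. *)
Lemma iso_omega2_times : iso A (omega2_times n).
Proof.
  set (f x := col x + to_nat (row x, pos x) * n).
  assert (Hmod : forall x, sdom A x -> f x mod n = col x) by (intros; now apply mod_copy, col_bound).
  assert (Hdiv : forall x, sdom A x -> f x / n = to_nat (row x, pos x))
    by (intros; now apply div_copy, col_bound).
  apply (iso_of_order_bijection _ _ f lin).
  - intros z [H|[_ H]]; [lia|]. unfold ord_omega2 in H. lia.
  - intros z. assert (Hc : z mod n < n) by (apply Nat.mod_upper_bound; lia).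
    destruct (of_nat (z / n)) as [r k] eqn:Erk.
    destruct (rank_surjective (fiber (z mod n) r) (linear_order_fiber _ _)
      (fiber_pred_finite_in _ _) (fun N => fiber_unbounded _ _ N Hc) k) as (x & Hx & Hk).
    destruct Hx as (Hx & Ec & Er). exists x. split; [exact Hx|].
    unfold f, pos. rewrite Ec, Er, Hk, <- Erk, cancel_to_of.
    symmetry. rewrite Nat.add_comm, Nat.mul_comm. apply Nat.div_mod_eq.
  - intros x y Hx Hy. rewrite lex_iff by assumption. cbn. unfold ord_times.
    rewrite !Hmod, !Hdiv, ord_omega2_to_nat by assumption. reflexivity.
Qed.

End OmegaSquaredTimes.

(** * Reversal and least elements *)

Definition swap_copy (k x : nat) : nat := (k - 1 - x mod k) + x / k * k.

Lemma swap_copy_mod_div k x : 1 <= k ->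
  swap_copy k x mod k = k - 1 - x mod k /\ swap_copy k x / k = x / k.
Proof.
  intros Hk. pose proof (Nat.mod_upper_bound x k).
  split; [apply mod_copy | apply div_copy]; lia.
Qed.

Lemma swap_copy_involutive k x : 1 <= k -> swap_copy k (swap_copy k x) = x.
Proof.
  intros Hk. destruct (swap_copy_mod_div k x Hk) as [Em Ed].
  unfold swap_copy at 1. rewrite Em, Ed.
  pose proof (Nat.div_mod_eq x k). pose proof (Nat.mod_upper_bound x k). lia.
Qed.

Lemma iso_rev_times L k : 1 <= k ->
  iso (struct_rev (Struct full_dom (ord_times L k))) (Struct full_dom (ord_times (ord_rev L) k)).
Proof.
  intros Hk. exists (swap_copy k), (swap_copy k). split; [|split].
  - intros x _. split; [exact I | now apply swap_copy_involutive].
  - intros y _. split; [exact I | now apply swap_copy_involutive].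
  - intros x y _ _. cbn. unfold ord_times, ord_rev.
    destruct (swap_copy_mod_div k x Hk) as [-> ->], (swap_copy_mod_div k y Hk) as [-> ->].
    pose proof (Nat.mod_upper_bound x k). pose proof (Nat.mod_upper_bound y k).
    split; (intros [Hlt|[Heq Hrel]]; [left; lia | right; split; [lia | exact Hrel]]).
Qed.

Definition has_least (A : structure) : Prop :=
  exists m, sdom A m /\ forall y, sdom A y -> y <> m -> srel A m y.

Lemma has_least_iso A B : iso A B -> has_least A -> has_least B.
Proof.
  intros (f & g & Hf & Hg & Hrel) (m & Hm & Hleast). destruct (Hf m Hm) as [Hfm Egm].
  exists (f m). split; [exact Hfm|]. intros y Hy Hne. destruct (Hg y Hy) as [Hgy Efy].
  rewrite <- Efy. apply Hrel; [exact Hm | exact Hgy |]. apply Hleast; [exact Hgy|].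
  intros E. apply Hne. now rewrite <- Efy, E.
Qed.

Lemma not_iso_of_least A B : has_least A -> ~ has_least B -> ~ iso A B.
Proof. intros HA HB HAB. exact (HB (has_least_iso A B HAB HA)). Qed.

Lemma has_least_times L k m : 1 <= k -> (forall y, y <> m -> L m y) ->
  has_least (Struct full_dom (ord_times L k)).
Proof.
  intros Hk Hm. exists (m * k). split; [exact I|]. intros y _ Hne. cbn. unfold ord_times.
  rewrite Nat.Div0.mod_mul, Nat.div_mul by lia.
  destruct (Nat.eq_dec (y mod k) 0) as [E|E]; [right; split; [lia|] | left; lia].
  apply Hm. intros Ey. apply Hne. rewrite (Nat.div_mod_eq y k), E, Ey. lia.
Qed.

Lemma no_least_times L k : 1 <= k -> (forall x y, L x y -> ~ L y x) -> (forall y, exists z, L z y) ->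
  ~ has_least (Struct full_dom (ord_times L k)).
Proof.
  intros Hk Hasym Hbelow (m & _ & Hleast). destruct (Hbelow (m / k)) as [z Hz].
  assert (Hmk : m mod k < k) by (apply Nat.mod_upper_bound; lia).
  set (y := m mod k + z * k).
  assert (Ey : y mod k = m mod k /\ y / k = z) by (split; [apply mod_copy | apply div_copy]; exact Hmk).
  assert (Hne : y <> m).
  { intros E. rewrite E in Ey. destruct Ey as [_ Ez]. rewrite Ez in Hz. exact (Hasym z z Hz Hz). }
  destruct (Hleast y I Hne) as [H|[_ H]].
  - rewrite (proj1 Ey) in H. lia.
  - rewrite (proj2 Ey) in H. exact (Hasym _ _ H Hz).
Qed.

Lemma not_iso_omega_times_2 : ~ iso omega_times_2 omega_star_times_2.
Proof.
  apply not_iso_of_least.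
  - apply (has_least_times _ _ 0); [lia|]. unfold ord_omega. lia.
  - apply no_least_times; [lia | unfold ord_rev, ord_omega; intros; lia |].
    intros y. exists (S y). unfold ord_rev, ord_omega. lia.
Qed.

Lemma ord_omega2_asym x y : ord_omega2 x y -> ~ ord_omega2 y x.
Proof. unfold ord_omega2. lia. Qed.

Lemma not_iso_omega2_times n : 1 <= n -> ~ iso (omega2_times n) (omega2_star_times n).
Proof.
  intros Hn. apply not_iso_of_least.
  - apply (has_least_times _ _ 0); [exact Hn|]. intros y Hy. unfold ord_omega2.
    change (of_nat 0) with (0, 0). cbn.
    destruct (of_nat y) as [[|a] [|b]] eqn:E; cbn; try lia.
    exfalso. apply Hy. now rewrite <- (cancel_to_of y), E.
  - apply no_least_times; [exact Hn | intros x y H; exact (ord_omega2_asym y x H) |].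
    intros y. exists (to_nat (S (fst (of_nat y)), 0)). unfold ord_rev, ord_omega2.
    rewrite cancel_of_to. cbn. lia.
Qed.

(** * The expansion *)

Definition triple (i a x : nat) : nat := to_nat (i, to_nat (a, x)).
Definition copy_of (e : nat) : nat := fst (of_nat e).
Definition pivot_of (e : nat) : nat := fst (of_nat (snd (of_nat e))).
Definition point_of (e : nat) : nat := snd (of_nat (snd (of_nat e))).

Lemma copy_triple i a x : copy_of (triple i a x) = i.
Proof. unfold copy_of, triple. now rewrite cancel_of_to. Qed.
Lemma pivot_triple i a x : pivot_of (triple i a x) = a.
Proof. unfold pivot_of, triple. rewrite cancel_of_to. cbn [snd]. now rewrite cancel_of_to. Qed.
Lemma point_triple i a x : point_of (triple i a x) = x.
Proof. unfold point_of, triple. rewrite cancel_of_to. cbn [snd]. now rewrite cancel_of_to. Qed.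

Lemma to_nat_mono x y x' y' : x <= x' -> y <= y' -> to_nat (x, y) <= to_nat (x', y').
Proof.
  intros Hx Hy. rewrite !to_nat_spec2.
  pose proof (Nat.Div0.div_le_mono ((y + x) * S (y + x)) ((y' + x') * S (y' + x')) 2
    ltac:(apply Nat.mul_le_mono; lia)). lia.
Qed.

Lemma triple_le i a x a' x' : a <= a' -> x <= x' -> triple i a x <= triple i a' x'.
Proof. intros Ha Hx. apply to_nat_mono; [lia | now apply to_nat_mono]. Qed.

Lemma triple_ge i a x : a <= triple i a x /\ x <= triple i a x.
Proof.
  unfold triple. pose proof (to_nat_non_decreasing i (to_nat (a, x))).
  pose proof (to_nat_non_decreasing a x). lia.
Qed.

Definition witnessed (A : structure) (a x : nat) : Prop :=
  exists p q, sdom A p /\ sdom A a /\ sdom A q /\ srel A p a /\ srel A a q /\ x = Nat.min p q.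

Definition triple_lt (A : structure) (i a x i' a' x' : nat) : Prop :=
  i < i' \/ (i = i' /\ (srel A a a' \/ (a = a' /\ srel A x x'))).

Definition expansion (n : nat) (A : structure) : structure :=
  Struct (fun e => exists i a x, e = triple i a x /\ i < n /\ witnessed A a x)
         (fun e e' => triple_lt A (copy_of e) (pivot_of e) (point_of e)
                                  (copy_of e') (pivot_of e') (point_of e')).

Lemma expansion_rel n A i a x i' a' x' :
  srel (expansion n A) (triple i a x) (triple i' a' x') <-> triple_lt A i a x i' a' x'.
Proof. unfold expansion. cbn [srel]. now rewrite !copy_triple, !pivot_triple, !point_triple. Qed.

Lemma witnessed_dom A a x : witnessed A a x -> sdom A a /\ sdom A x.
Proof.
  intros (p & q & Hp & Ha & Hq & _ & _ & ->).
  split; [exact Ha|]. now destruct (Nat.min_spec p q) as [[_ ->]|[_ ->]].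
Qed.

Lemma witnessed_rev A a x : witnessed (struct_rev A) a x <-> witnessed A a x.
Proof.
  unfold witnessed. cbn.
  split; intros (p & q & Hp & Ha & Hq & Hpa & Haq & ->); exists q, p; repeat split; auto; lia.
Qed.

Lemma linear_order_expansion n A : linear_order A -> linear_order (expansion n A).
Proof.
  intros [Hirr Htr Htot]. split.
  - intros e (i & a & x & -> & _ & Hw). apply witnessed_dom in Hw as [Ha Hx].
    rewrite expansion_rel. intros [H|[_ [H|[_ H]]]]; [lia | exact (Hirr a Ha H) | exact (Hirr x Hx H)].
  - intros e1 e2 e3 (i & a & x & -> & _ & Hw) (i' & a' & x' & -> & _ & Hw')
      (i'' & a'' & x'' & -> & _ & Hw'').
    apply witnessed_dom in Hw as [Ha Hx], Hw' as [Ha' Hx'], Hw'' as [Ha'' Hx''].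
    rewrite !expansion_rel. unfold triple_lt.
    intros [H1|[-> [H1|[-> H1]]]] [H2|[-> [H2|[-> H2]]]]; try (left; lia); right; split; auto; eauto 7.
  - intros e e' (i & a & x & -> & _ & Hw) (i' & a' & x' & -> & _ & Hw').
    apply witnessed_dom in Hw as [Ha Hx], Hw' as [Ha' Hx']. rewrite !expansion_rel. unfold triple_lt.
    destruct (Nat.lt_trichotomy i i') as [H|[<-|H]]; auto.
    destruct (Htot a a' Ha Ha') as [<-|[H|H]]; [|auto 6..].
    destruct (Htot x x' Hx Hx') as [<-|[H|H]]; auto 7.
Qed.

Lemma expansion_rev n A : 1 <= n -> iso (expansion n A) (struct_rev (expansion n (struct_rev A))).
Proof.
  intros Hn. set (flip e := triple (n - 1 - copy_of e) (pivot_of e) (point_of e)).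
  assert (Hflip : forall i a x, flip (triple i a x) = triple (n - 1 - i) a x).
  { intros. unfold flip. now rewrite copy_triple, pivot_triple, point_triple. }
  exists flip, flip. split; [|split].
  - intros e (i & a & x & -> & Hi & Hw). rewrite !Hflip. split.
    + exists (n - 1 - i), a, x. rewrite witnessed_rev. repeat split; [lia | exact Hw].
    + f_equal. lia.
  - intros e (i & a & x & -> & Hi & Hw). rewrite !Hflip. split.
    + exists (n - 1 - i), a, x. rewrite witnessed_rev in Hw. repeat split; [lia | exact Hw].
    + f_equal. lia.
  - intros e e' (i & a & x & -> & Hi & _) (i' & a' & x' & -> & Hi' & _).
    rewrite !Hflip. cbn [srel struct_rev]. rewrite !expansion_rel. unfold triple_lt. cbn.
    split; (intros [H|[E [H|[E' H]]]];
      [left; lia | right; split; [lia | now left]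
      | right; split; [lia | right; split; [congruence | exact H]]]).
Qed.

(** * The expansion of omega.2 *)

Lemma injective_unbounded (h : nat -> nat) : (forall i j, h i = h j -> i = j) ->
  forall N K, exists k, K <= k /\ N <= h k.
Proof.
  intros Hinj N K. apply NNPP. intros Hno.
  assert (Hsmall : forall k, K <= k -> h k < N).
  { intros k Hk. apply Nat.nle_gt. intros HN. apply Hno. eauto. }
  assert (Hincl : incl (map h (seq K (S N))) (seq 0 N)).
  { intros z (k & <- & Hk)%in_map_iff. apply in_seq in Hk. apply in_seq.
    specialize (Hsmall k ltac:(lia)). lia. }
  apply NoDup_incl_length in Hincl; [rewrite length_map, !length_seq in Hincl; lia|].
  apply Injective_map_NoDup; [intros i j; apply Hinj | apply seq_NoDup].
Qed.

Lemma bounded_initial (h : nat -> nat) K : exists M, forall j, j <= K -> h j <= M.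
Proof.
  induction K as [|K [M HM]]; [exists (h 0); intros j Hj; replace j with 0 by lia; lia|].
  exists (Nat.max M (h (S K))). intros j Hj.
  destruct (Nat.eq_dec j (S K)) as [->|]; [lia|]. specialize (HM j ltac:(lia)). lia.
Qed.

Section ExpansionOfOmegaTimes2.
Variables (n : nat) (A : structure) (f g : nat -> nat).
Hypothesis n_pos : 1 <= n.
Hypothesis gf : forall x, sdom A x -> g (f x) = x.
Hypothesis fg : forall z, sdom A (g z) /\ f (g z) = z.
Hypothesis f_rel : forall x y, sdom A x -> sdom A y ->
  (srel A x y <-> ord_times ord_omega 2 (f x) (f y)).

(* [f] identifies [A] with omega.2: [half x] is the copy of omega containing [x]
   and [idx x] its position there; [elt h j] is the inverse. *)
Let half (x : nat) : nat := f x mod 2.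
Let idx (x : nat) : nat := f x / 2.
Let elt (h j : nat) : nat := g (h + j * 2).

Lemma linear_order_A : linear_order A.
Proof.
  apply (linear_order_iso A omega_times_2).
  - exists f, g. split; [|split]; [intros x Hx; split; auto; exact I | intros z _; apply fg | exact f_rel].
  - apply linear_order_times; unfold ord_omega; intros; lia.
Qed.

Lemma half_lt_2 x : half x < 2.
Proof. apply Nat.mod_upper_bound. lia. Qed.

Lemma elt_coords h j : h < 2 -> half (elt h j) = h /\ idx (elt h j) = j.
Proof.
  intros Hh. unfold half, idx, elt. rewrite (proj2 (fg _)).
  split; [apply mod_copy | apply div_copy]; exact Hh.
Qed.

Lemma elt_of_coords x : sdom A x -> elt (half x) (idx x) = x.
Proof.
  intros Hx. unfold elt, half, idx. rewrite Nat.add_comm, Nat.mul_comm, <- Nat.div_mod_eq. now apply gf.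
Qed.

Lemma rel_coords x y : sdom A x -> sdom A y ->
  (srel A x y <-> half x < half y \/ (half x = half y /\ idx x < idx y)).
Proof. intros Hx Hy. now rewrite f_rel. Qed.

Lemma elt_large h N K : h < 2 -> exists j, K <= j /\ N <= elt h j.
Proof.
  intros Hh. apply injective_unbounded. intros i j E.
  rewrite <- (proj2 (elt_coords h i Hh)), <- (proj2 (elt_coords h j Hh)), E. reflexivity.
Qed.

Lemma same_half_below_bounded x : exists M, forall y, sdom A y ->
  half y = half x -> idx y <= idx x -> y <= M.
Proof.
  destruct (bounded_initial (elt (half x)) (idx x)) as [M HM]. exists M.
  intros y Hy Eh Hi. rewrite <- (elt_of_coords y Hy), Eh. now apply HM.
Qed.

Lemma above_large x N : sdom A x -> exists q, sdom A q /\ srel A x q /\ N <= q.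
Proof.
  intros Hx. destruct (elt_large 1 N (S (idx x))) as (j & Hj & HN); [lia|].
  exists (elt 1 j). split; [apply fg|]. split; [|exact HN].
  apply rel_coords; [exact Hx | apply fg |]. destruct (elt_coords 1 j) as [-> ->]; [lia|].
  pose proof (half_lt_2 x). lia.
Qed.

Lemma below_second_half_large a N : sdom A a -> half a = 1 ->
  exists p, sdom A p /\ srel A p a /\ N <= p.
Proof.
  intros Ha Eh. destruct (elt_large 0 N 0) as (j & _ & HN); [lia|].
  exists (elt 0 j). split; [apply fg|]. split; [|exact HN].
  apply rel_coords; [apply fg | exact Ha |]. rewrite (proj1 (elt_coords 0 j ltac:(lia))). lia.
Qed.

Lemma witnessed_second_half a x : sdom A a -> sdom A x -> half a = 1 -> x <> a -> witnessed A a x.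
Proof.
  intros Ha Hx Eh Hne.
  destruct (lo_total _ linear_order_A x a Hx Ha) as [E|[Hxa|Hax]]; [contradiction| |].
  - destruct (above_large a x Ha) as (q & Hq & Haq & Hxq).
    exists x, q. repeat split; auto. lia.
  - destruct (below_second_half_large a x Ha Eh) as (p & Hp & Hpa & Hxp).
    exists p, x. repeat split; auto. lia.
Qed.

Definition row (e : nat) : nat :=
  if half (pivot_of e) =? 0 then 0 else 1 + 2 * idx (pivot_of e) + half (point_of e).

Lemma row_triple i a x :
  row (triple i a x) = if half a =? 0 then 0 else 1 + 2 * idx a + half x.
Proof. unfold row. now rewrite pivot_triple, point_triple. Qed.

Lemma row_lex_mono e e' : sdom (expansion n A) e -> sdom (expansion n A) e' ->
  srel (expansion n A) e e' ->
  copy_of e < copy_of e' \/ (copy_of e = copy_of e' /\ row e <= row e').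
Proof.
  intros (i & a & x & -> & _ & Hw) (i' & a' & x' & -> & _ & Hw').
  apply witnessed_dom in Hw as [Ha Hx], Hw' as [Ha' Hx'].
  rewrite expansion_rel, !copy_triple, !row_triple.
  intros [Hi|[<- H]]; [now left | right; split; [reflexivity|]].
  pose proof (half_lt_2 a). pose proof (half_lt_2 a'). pose proof (half_lt_2 x). pose proof (half_lt_2 x').
  destruct H as [H|[<- H]]; rewrite rel_coords in H by assumption.
  - destruct (Nat.eqb_spec (half a) 0), (Nat.eqb_spec (half a') 0); lia.
  - destruct (Nat.eqb_spec (half a) 0); lia.
Qed.

Lemma row_fiber_unbounded c r N : c < n ->
  exists e, sdom (fiber (expansion n A) copy_of row c r) e /\ N <= e.
Proof.
  intros Hc. destruct r as [|r].
  - destruct (elt_large 0 N 1) as (j & Hj & HN); [lia|].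
    destruct (elt_coords 0 j) as [Eh Ei]; [lia|].
    destruct (above_large (elt 0 j) (elt 0 0) (proj1 (fg _))) as (q & Hq & Haq & Hq0).
    exists (triple c (elt 0 j) (elt 0 0)).
    split; [|pose proof (triple_ge c (elt 0 j) (elt 0 0)); lia].
    split; [|split; [apply copy_triple | rewrite row_triple, Eh; reflexivity]].
    exists c, (elt 0 j), (elt 0 0). split; [reflexivity|]. split; [exact Hc|].
    exists (elt 0 0), q. repeat split; try apply fg; auto; [|lia].
    apply rel_coords; try apply fg. rewrite Eh, Ei. destruct (elt_coords 0 0) as [-> ->]; lia.
  - destruct (elt_coords 1 (r / 2)) as [Eh Ei]; [lia|].
    assert (Hh : r mod 2 < 2) by (apply Nat.mod_upper_bound; lia).
    destruct (elt_large (r mod 2) (N + elt 1 (r / 2) + 1) 0) as (j & _ & HN); [exact Hh|].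
    destruct (elt_coords (r mod 2) j Hh) as [Ex _].
    exists (triple c (elt 1 (r / 2)) (elt (r mod 2) j)).
    split; [|pose proof (triple_ge c (elt 1 (r / 2)) (elt (r mod 2) j)); lia].
    split; [|split; [apply copy_triple|]].
    + exists c, (elt 1 (r / 2)), (elt (r mod 2) j). split; [reflexivity|]. split; [exact Hc|].
      apply witnessed_second_half; try apply fg; [exact Eh | lia].
    + rewrite row_triple, Eh, Ei, Ex. cbn [Nat.eqb]. pose proof (Nat.div_mod_eq r 2). lia.
Qed.

Lemma row_fiber_pred_finite e : sdom (expansion n A) e ->
  exists N, forall e', sdom (fiber (expansion n A) copy_of row (copy_of e) (row e)) e' ->
    srel (expansion n A) e' e -> e' < N.
Proof.
  intros (i & a & x & -> & _ & Hw). apply witnessed_dom in Hw as [Ha Hx].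
  rewrite copy_triple, row_triple.
  pose proof (half_lt_2 a). pose proof (half_lt_2 x).
  destruct (Nat.eqb_spec (half a) 0) as [Ea|Ea].
  - destruct (same_half_below_bounded a) as [M HM]. exists (S (triple i M M)).
    intros e' ((i' & a' & x' & -> & _ & Hw') & Ei & Er) Hlt.
    destruct Hw' as (p & q & Hp & Ha' & Hq & Hpa & Haq & ->).
    rewrite copy_triple in Ei. subst i'. rewrite row_triple in Er.
    rewrite expansion_rel in Hlt.
    assert (Ea' : half a' = 0) by (destruct (Nat.eqb_spec (half a') 0); [assumption | lia]).
    assert (Hia : idx a' <= idx a).
    { destruct Hlt as [Hlt|[_ [Hlt|[-> _]]]]; [lia | rewrite rel_coords in Hlt by assumption; lia | lia]. }
    rewrite rel_coords in Hpa by assumption.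
    assert (a' <= M) by (apply HM; auto; lia).
    assert (p <= M) by (apply HM; auto; lia).
    pose proof (triple_le i a' (Nat.min p q) M M). lia.
  - destruct (same_half_below_bounded x) as [M HM]. exists (S (triple i a M)).
    intros e' ((i' & a' & x' & -> & _ & Hw') & Ei & Er) Hlt.
    apply witnessed_dom in Hw' as [Ha' Hx'].
    rewrite copy_triple in Ei. subst i'. rewrite row_triple in Er.
    pose proof (half_lt_2 a'). pose proof (half_lt_2 x').
    destruct (Nat.eqb_spec (half a') 0); [lia|].
    assert (a' = a) as ->.
    { rewrite <- (elt_of_coords a' Ha'), <- (elt_of_coords a Ha). f_equal; lia. }
    rewrite expansion_rel in Hlt.
    destruct Hlt as [Hlt|[_ [Hlt|[_ Hlt]]]]; [lia | now apply (lo_irrefl _ linear_order_A) in Hlt|].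
    rewrite rel_coords in Hlt by assumption.
    assert (x' <= M) by (apply HM; auto; lia).
    pose proof (triple_le i a x' a M). lia.
Qed.

Lemma expansion_iso_omega2_times : iso (expansion n A) (omega2_times n).
Proof.
  apply (iso_omega2_times n _ copy_of row n_pos).
  - exact (linear_order_expansion n A linear_order_A).
  - intros e (i & a & x & -> & Hi & _). now rewrite copy_triple.
  - exact row_lex_mono.
  - exact row_fiber_unbounded.
  - exact row_fiber_pred_finite.
Qed.

End ExpansionOfOmegaTimes2.

Lemma expansion_omega_times_2 n A : 1 <= n -> iso A omega_times_2 ->
  iso (expansion n A) (omega2_times n).
Proof.
  intros Hn (f & g & Hf & Hg & Hrel).
  apply (expansion_iso_omega2_times n A f g Hn); [apply Hf | intros z; apply Hg, I | exact Hrel].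
Qed.

Lemma expansion_omega_star_times_2 n A : 1 <= n -> iso A omega_star_times_2 ->
  iso (expansion n A) (omega2_star_times n).
Proof.
  intros Hn HA.
  assert (Hrev : iso (struct_rev A) omega_times_2)
    by exact (iso_trans _ _ _ (iso_rev _ _ HA) (iso_rev_times (ord_rev ord_omega) 2 ltac:(lia))).
  eapply iso_trans; [exact (expansion_rev n A Hn)|].
  eapply iso_trans; [exact (iso_rev _ _ (expansion_omega_times_2 n _ Hn Hrev))|].
  exact (iso_rev_times ord_omega2 n Hn).
Qed.

(** * The enumeration operator *)

(* The parameters of one rule of the operator: [p1 < a1 < q1] and
   [p2 < a2 < q2] put the two triples in the expansion, and [u < v] is the
   reason for the conclusion, whose form is selected by [g_sign] and [g_kind]. *)
Record gparams : Type := GParams {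
  g_sign : nat; g_kind : nat;
  g_i1 : nat; g_a1 : nat; g_p1 : nat; g_q1 : nat;
  g_i2 : nat; g_a2 : nat; g_p2 : nat; g_q2 : nat;
  g_u : nat; g_v : nat }.

Definition params_list (P : gparams) : list nat :=
  [g_sign P; g_kind P; g_i1 P; g_a1 P; g_p1 P; g_q1 P; g_i2 P; g_a2 P; g_p2 P; g_q2 P; g_u P; g_v P].

Definition params_of_list (l : list nat) : gparams :=
  GParams (nth 0 l 0) (nth 1 l 0) (nth 2 l 0) (nth 3 l 0) (nth 4 l 0) (nth 5 l 0)
          (nth 6 l 0) (nth 7 l 0) (nth 8 l 0) (nth 9 l 0) (nth 10 l 0) (nth 11 l 0).

Lemma params_list_of_list l : length l = 12 -> params_list (params_of_list l) = l.
Proof. intros Hl. do 12 (destruct l as [|? l]; try discriminate). now destruct l. Qed.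

Definition g_e1 (P : gparams) : nat := triple (g_i1 P) (g_a1 P) (Nat.min (g_p1 P) (g_q1 P)).
Definition g_e2 (P : gparams) : nat := triple (g_i2 P) (g_a2 P) (Nat.min (g_p2 P) (g_q2 P)).

Definition gamma_alpha (P : gparams) : list basic :=
  [(true, ALt (g_p1 P) (g_a1 P)); (true, ALt (g_a1 P) (g_q1 P));
   (true, ALt (g_p2 P) (g_a2 P)); (true, ALt (g_a2 P) (g_q2 P));
   (true, ALt (g_u P) (g_v P))].

Definition gamma_phi (P : gparams) : basic :=
  (g_sign P =? 1, if g_kind P =? 0 then AEq (g_e1 P) (g_e2 P) else ALt (g_e1 P) (g_e2 P)).

(* [u < v] justifies [triple i a x < triple i' a' x'], where [p < a] is a
   fact that is known anyway. *)
Definition lex_reason (i a x p i' a' x' u v : nat) : Prop :=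
  (i < i' /\ (u = p /\ v = a)) \/
  (i = i' /\ (u = a /\ v = a')) \/
  (i = i' /\ (a = a' /\ (u = x /\ v = x'))).

Definition admissible (n : nat) (P : gparams) : Prop :=
  match P with
  | GParams s k i1 a1 p1 q1 i2 a2 p2 q2 u v =>
    let x1 := Nat.min p1 q1 in let x2 := Nat.min p2 q2 in
    let e1 := triple i1 a1 x1 in let e2 := triple i2 a2 x2 in
    let trivial_reason := u = p1 /\ v = a1 in
    let eq_case := k = 0 /\ (s = 1 /\ (e1 = e2 /\ trivial_reason)) in
    let neq_case := k = 0 /\ (s = 0 /\ (~ e1 = e2 /\ trivial_reason)) in
    let lt_case := k = 1 /\ (s = 1 /\ lex_reason i1 a1 x1 p1 i2 a2 x2 u v) in
    let nlt_case := k = 1 /\ (s = 0 /\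
      (lex_reason i2 a2 x2 p2 i1 a1 x1 u v \/ (e1 = e2 /\ trivial_reason))) in
    s <= 1 /\ (k <= 1 /\ (i1 < n /\ (i2 < n /\ (eq_case \/ (neq_case \/ (lt_case \/ nlt_case))))))
  end.

Definition Gamma (n : nat) (alpha : list basic) (phi : basic) : Prop :=
  exists P, admissible n P /\ alpha = gamma_alpha P /\ phi = gamma_phi P.

Definition tripleE (i a x : expr) : expr := pairE i (pairE a x).

Lemma denote_tripleE i a x env :
  denote (tripleE i a x) env = triple (denote i env) (denote a env) (denote x env).
Proof. reflexivity. Qed.

Definition lex_reasonB (i a x p i' a' x' u v : expr) : bexpr :=
  BOr (BAnd (BLt i i') (BAnd (BEq u p) (BEq v a)))
 (BOr (BAnd (BEq i i') (BAnd (BEq u a) (BEq v a')))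
      (BAnd (BEq i i') (BAnd (BEq a a') (BAnd (BEq u x) (BEq v x'))))).

Definition admissibleB (n : nat) : bexpr :=
  let s := EVar 0 in let k := EVar 1 in
  let i1 := EVar 2 in let a1 := EVar 3 in let p1 := EVar 4 in let q1 := EVar 5 in
  let i2 := EVar 6 in let a2 := EVar 7 in let p2 := EVar 8 in let q2 := EVar 9 in
  let u := EVar 10 in let v := EVar 11 in
  let x1 := minE p1 q1 in let x2 := minE p2 q2 in
  let e1 := tripleE i1 a1 x1 in let e2 := tripleE i2 a2 x2 in
  let trivial_reason := BAnd (BEq u p1) (BEq v a1) in
  let eq_case := BAnd (BEq k (ECst 0)) (BAnd (BEq s (ECst 1)) (BAnd (BEq e1 e2) trivial_reason)) in
  let neq_case :=
    BAnd (BEq k (ECst 0)) (BAnd (BEq s (ECst 0)) (BAnd (BNot (BEq e1 e2)) trivial_reason)) in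
  let lt_case := BAnd (BEq k (ECst 1)) (BAnd (BEq s (ECst 1)) (lex_reasonB i1 a1 x1 p1 i2 a2 x2 u v)) in
  let nlt_case := BAnd (BEq k (ECst 1)) (BAnd (BEq s (ECst 0))
    (BOr (lex_reasonB i2 a2 x2 p2 i1 a1 x1 u v) (BAnd (BEq e1 e2) trivial_reason))) in
  BAnd (BLe s (ECst 1)) (BAnd (BLe k (ECst 1)) (BAnd (BLt i1 (ECst n)) (BAnd (BLt i2 (ECst n))
    (BOr eq_case (BOr neq_case (BOr lt_case nlt_case)))))).

Lemma admissibleB_spec n P : bholds (admissibleB n) (params_list P) <-> admissible n P.
Proof.
  destruct P. cbn [admissibleB lex_reasonB bholds].
  rewrite !denote_tripleE, !denote_minE. reflexivity.
Qed.

Definition atomE (u v : expr) : expr := pairE (ECst 1) (pairE (ECst 1) (pairE u v)).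
Definition consE (h t : expr) : expr := EAdd (ECst 1) (pairE h t).

Definition codeE : expr :=
  let s := EVar 0 in let k := EVar 1 in
  let i1 := EVar 2 in let a1 := EVar 3 in let p1 := EVar 4 in let q1 := EVar 5 in
  let i2 := EVar 6 in let a2 := EVar 7 in let p2 := EVar 8 in let q2 := EVar 9 in
  let u := EVar 10 in let v := EVar 11 in
  pairE
    (consE (atomE p1 a1) (consE (atomE a1 q1) (consE (atomE p2 a2) (consE (atomE a2 q2)
      (consE (atomE u v) (ECst 0))))))
    (pairE s (pairE k (pairE (tripleE i1 a1 (minE p1 q1)) (tripleE i2 a2 (minE p2 q2))))).

Lemma codeE_spec P : g_sign P <= 1 -> g_kind P <= 1 ->
  to_nat (code_list (gamma_alpha P), code_basic (gamma_phi P)) = denote codeE (params_list P).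
Proof.
  destruct P as [s k i1 a1 p1 q1 i2 a2 p2 q2 u v]; cbn [g_sign g_kind]. intros Hs Hk.
  unfold codeE, consE, atomE. rewrite !denote_pairE, !denote_tripleE, !denote_minE.
  cbn [denote nth params_list g_sign g_kind g_i1 g_a1 g_p1 g_q1 g_i2 g_a2 g_p2 g_q2 g_u g_v].
  rewrite !denote_pairE. cbn [denote].
  unfold gamma_alpha, gamma_phi, g_e1, g_e2, triple.
  destruct s as [|[|]]; [| |lia]; destruct k as [|[|]]; try lia; reflexivity.
Qed.

Definition headE (l : expr) : expr := fstE (ESub l (ECst 1)).
Definition tailE (l : expr) : expr := sndE (ESub l (ECst 1)).
Definition atom_uE (b : expr) : expr := fstE (sndE (sndE b)).
Definition atom_vE (b : expr) : expr := sndE (sndE (sndE b)).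

Definition decodeE : list expr :=
  let L := fstE (EVar 0) in let Ph := sndE (EVar 0) in
  let E := sndE (sndE Ph) in let e1 := fstE E in let e2 := sndE E in
  let L1 := tailE L in let L2 := tailE L1 in let L3 := tailE L2 in let L4 := tailE L3 in
  [fstE Ph; fstE (sndE Ph); fstE e1; fstE (sndE e1); atom_uE (headE L); atom_vE (headE L1);
   fstE e2; fstE (sndE e2); atom_uE (headE L2); atom_vE (headE L3);
   atom_uE (headE L4); atom_vE (headE L4)].

Lemma decodeE_spec env : length env = 12 ->
  map (fun d => denote d [denote codeE env]) decodeE = env.
Proof.
  intros Henv. rewrite <- (params_list_of_list env Henv).
  destruct (params_of_list env) as [s k i1 a1 p1 q1 i2 a2 p2 q2 u v].
  unfold decodeE, headE, tailE, atom_uE, atom_vE, codeE, consE, atomE. cbn [map].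
  repeat progress (rewrite ?denote_fstE, ?denote_sndE, ?denote_pairE, ?denote_tripleE;
    cbn [denote nth params_list g_sign g_kind g_i1 g_a1 g_p1 g_q1 g_i2 g_a2 g_p2 g_q2 g_u g_v]).
  unfold triple. repeat progress (rewrite ?cancel_of_to, ?Nat.sub_succ, ?Nat.sub_0_r; cbn [fst snd Nat.add]).
  reflexivity.
Qed.

Lemma enum_operator_Gamma n : enum_operator (Gamma n).
Proof.
  apply (ce_ext (fun c => exists env, length env = 12 /\ bdenote (admissibleB n) env = true /\
                                      c = denote codeE env)).
  2: { apply (ce_decodable 12 _ _ decodeE); [reflexivity | exact decodeE_spec]. }
  intros c. split.
  - intros (env & Henv & Hadm & ->). rewrite <- (params_list_of_list env Henv) in *.
    set (P := params_of_list env) in *.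
    rewrite bdenote_true_iff, admissibleB_spec in Hadm.
    exists (gamma_alpha P), (gamma_phi P). split; [|now exists P].
    symmetry. apply codeE_spec; destruct P; cbn in Hadm |- *; lia.
  - intros (alpha & phi & -> & P & Hadm & -> & ->).
    exists (params_list P). split; [reflexivity|]. split.
    + now rewrite bdenote_true_iff, admissibleB_spec.
    + apply codeE_spec; destruct P; cbn in Hadm |- *; lia.
Qed.

Definition lt_in (A : structure) (u v : nat) : Prop := sdom A u /\ sdom A v /\ srel A u v.

Definition premises (A : structure) (P : gparams) : Prop :=
  lt_in A (g_p1 P) (g_a1 P) /\ lt_in A (g_a1 P) (g_q1 P) /\
  lt_in A (g_p2 P) (g_a2 P) /\ lt_in A (g_a2 P) (g_q2 P) /\ lt_in A (g_u P) (g_v P).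

Lemma diag_lt A u v : diag A (true, ALt u v) <-> lt_in A u v.
Proof. unfold diag, lt_in. cbn. tauto. Qed.

Lemma gamma_alpha_diag A P : (forall psi, In psi (gamma_alpha P) -> diag A psi) <-> premises A P.
Proof.
  unfold premises. split.
  - intros H. split; [|split; [|split; [|split]]]; apply diag_lt, H; cbn; tauto.
  - intros (H1 & H2 & H3 & H4 & H5) psi Hin. cbn in Hin.
    repeat destruct Hin as [<-|Hin]; solve [apply diag_lt; assumption | contradiction].
Qed.

Lemma min_dom A p q : sdom A p -> sdom A q -> sdom A (Nat.min p q).
Proof. intros Hp Hq. now destruct (Nat.min_spec p q) as [[_ ->]|[_ ->]]. Qed.

Lemma lex_reason_sound A i a x p i' a' x' u v :
  lex_reason i a x p i' a' x' u v -> srel A u v -> triple_lt A i a x i' a' x'.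
Proof.
  unfold lex_reason, triple_lt. intros [(Hi & _)|[(-> & -> & ->)|(-> & -> & -> & ->)]] Huv; auto.
Qed.

Lemma lex_reason_complete A i a x p i' a' x' : lt_in A p a -> sdom A a' -> sdom A x -> sdom A x' ->
  triple_lt A i a x i' a' x' -> exists u v, lex_reason i a x p i' a' x' u v /\ lt_in A u v.
Proof.
  unfold lex_reason, triple_lt, lt_in. intros (Hp & Ha & Hpa) Ha' Hx Hx' [Hi|[-> [Haa|[-> Hxx]]]].
  - exists p, a. auto.
  - exists a, a'. auto 6.
  - exists x, x'. auto 8.
Qed.

Lemma triple_in_expansion n A i a p q : i < n -> lt_in A p a -> lt_in A a q ->
  sdom (expansion n A) (triple i a (Nat.min p q)).
Proof.
  intros Hi (Hp & Ha & Hpa) (_ & Hq & Haq).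
  exists i, a, (Nat.min p q). split; [reflexivity|]. split; [exact Hi|]. exists p, q. auto 7.
Qed.

Lemma expansion_diag_of_rule n A P : linear_order A -> admissible n P -> premises A P ->
  diag (expansion n A) (gamma_phi P).
Proof.
  intros Hlin Hadm Hprem. destruct (linear_order_expansion n A Hlin) as [Eirr Etr _].
  destruct P as [s k i1 a1 p1 q1 i2 a2 p2 q2 u v].
  destruct Hprem as (Hpa1 & Haq1 & Hpa2 & Haq2 & (_ & _ & Huv)).
  cbn [g_p1 g_a1 g_q1 g_p2 g_a2 g_q2 g_u g_v] in Hpa1, Haq1, Hpa2, Haq2, Huv.
  cbn [admissible] in Hadm. destruct Hadm as (_ & _ & Hi1 & Hi2 & Hcase).
  pose proof (triple_in_expansion n A i1 a1 p1 q1 Hi1 Hpa1 Haq1) as D1.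
  pose proof (triple_in_expansion n A i2 a2 p2 q2 Hi2 Hpa2 Haq2) as D2.
  unfold diag, gamma_phi, g_e1, g_e2. cbn [g_sign g_kind g_i1 g_a1 g_p1 g_q1 g_i2 g_a2 g_p2 g_q2].
  destruct Hcase as [(-> & -> & E & _)|[(-> & -> & E & _)|[(-> & -> & R)|(-> & -> & [R|(E & _)])]]];
    cbn [Nat.eqb fst snd atom_consts_in atom_holds]; (split; [split; assumption|]).
  - exact E.
  - exact E.
  - rewrite expansion_rel. exact (lex_reason_sound A _ _ _ _ _ _ _ _ _ R Huv).
  - intros H. apply (lex_reason_sound A) in R; [|exact Huv].
    rewrite <- expansion_rel with (n := n) in R. exact (Eirr _ D1 (Etr _ _ _ D1 D2 D1 H R)).
  - rewrite E. exact (Eirr _ D2).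
Qed.

Ltac rule_checks :=
  split; [cbn [admissible]; unfold lex_reason in *; lia
         | split; [reflexivity | unfold premises, lt_in in *; cbn; tauto]].

Lemma rule_of_expansion_diag n A phi : linear_order A -> diag (expansion n A) phi ->
  exists P, admissible n P /\ phi = gamma_phi P /\ premises A P.
Proof.
  destruct phi as [b atm]. intros Hlin [Hc Hb].
  destruct (linear_order_expansion n A Hlin) as [_ _ Etot].
  destruct atm as [e e'|e e']; cbn [snd fst atom_consts_in atom_holds] in Hc, Hb;
    destruct Hc as [De De'];
    pose proof De as (i & a & x & -> & Hi & p & q & Hp & Ha & Hq & Hpa & Haq & ->);
    pose proof De' as (i' & a' & x' & -> & Hi' & p' & q' & Hp' & Ha' & Hq' & Hpa' & Haq' & ->);
    destruct b.
  - exists (GParams 1 0 i a p q i' a' p' q' p a). rule_checks.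
  - exists (GParams 0 0 i a p q i' a' p' q' p a). rule_checks.
  - rewrite expansion_rel in Hb.
    destruct (lex_reason_complete A i a _ p i' a' _ (conj Hp (conj Ha Hpa)) Ha'
      (min_dom A p q Hp Hq) (min_dom A p' q' Hp' Hq') Hb) as (u & v & R & Huv).
    exists (GParams 1 1 i a p q i' a' p' q' u v). rule_checks.
  - destruct (Etot _ _ De De') as [E|[Hlt|Hgt]]; [|contradiction|].
    + exists (GParams 0 1 i a p q i' a' p' q' p a). rule_checks.
    + rewrite expansion_rel in Hgt.
      destruct (lex_reason_complete A i' a' _ p' i a _ (conj Hp' (conj Ha' Hpa')) Ha
        (min_dom A p' q' Hp' Hq') (min_dom A p q Hp Hq) Hgt) as (u & v & R & Huv).
      exists (GParams 0 1 i a p q i' a' p' q' u v). rule_checks.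
Qed.

Lemma diag_expansion n A : linear_order A ->
  forall phi, diag (expansion n A) phi <-> apply_op (Gamma n) (diag A) phi.
Proof.
  intros Hlin phi. split.
  - intros H. destruct (rule_of_expansion_diag n A phi Hlin H) as (P & Hadm & -> & Hprem).
    exists (gamma_alpha P). split; [now exists P | now apply gamma_alpha_diag].
  - intros (alpha & (P & Hadm & -> & ->) & Hal). apply gamma_alpha_diag in Hal.
    now apply expansion_diag_of_rule.
Qed.

Lemma comp_embeddable_pair A0 A1 B0 B1 (Gamma : list basic -> basic -> Prop)
  (F : structure -> structure) :
  enum_operator Gamma ->
  (forall A, class2 A0 A1 A -> forall phi, diag (F A) phi <-> apply_op Gamma (diag A) phi) ->
  (forall A, iso A A0 -> iso (F A) B0) -> (forall A, iso A A1 -> iso (F A) B1) ->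
  ~ iso A0 A1 -> ~ iso B0 B1 ->
  comp_embeddable (class2 A0 A1) (class2 B0 B1).
Proof.
  intros HGamma Hdiag HF0 HF1 HA01 HB01.
  assert (HF : forall A B, class2 A0 A1 A -> (forall phi, diag B phi <-> apply_op Gamma (diag A) phi) ->
    iso B (F A)).
  { intros A B HA HB. apply iso_of_same_diag. intros phi. now rewrite HB, Hdiag. }
  exists Gamma. split; [exact HGamma|]. split.
  - intros A HA. exists (F A). split; [|exact (Hdiag A HA)].
    destruct HA as [HA|HA]; [left; exact (HF0 A HA) | right; exact (HF1 A HA)].
  - intros A A' B B' HA HA' HB HB'. rewrite (HF A B HA HB), (HF A' B' HA' HB').
    destruct HA as [HA|HA], HA' as [HA'|HA'];
      [rewrite (HF0 A HA), (HF0 A' HA') | rewrite (HF0 A HA), (HF1 A' HA')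
      |rewrite (HF1 A HA), (HF0 A' HA') | rewrite (HF1 A HA), (HF1 A' HA')];
      rewrite HA, HA'; split; intros H; solve [reflexivity | exfalso; auto using iso_sym].
Qed.

Theorem corollary3p4 (n : nat) (hn : 1 <= n) :
  comp_embeddable (class2 omega_times_2 omega_star_times_2)
                  (class2 (omega2_times n) (omega2_star_times n)).
Proof.
  apply (comp_embeddable_pair _ _ _ _ (Gamma n) (expansion n)).
  - apply enum_operator_Gamma.
  - intros A HA. apply diag_expansion.
    destruct HA as [HA|HA]; apply (linear_order_iso _ _ HA), linear_order_times;
      unfold ord_rev, ord_omega; intros; lia.
  - intros A HA. now apply expansion_omega_times_2.
  - intros A HA. now apply expansion_omega_star_times_2.
  - exact not_iso_omega_times_2.
  - exact (not_iso_omega2_times n hn).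
Qed.
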